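(* Let $\rho>0$ and $\epsilon>0$. Suppose that $({\mathbf{x}}_1,{\mathbf{y}}_1,{\mathbf{y}}_2,{\mathbf{x}}_2,{\mathbf{z}}_1,{\mathbf{z}}_2)$ is an $\epsilon$-primal-dual stationary point of the penalty problem $\min_{{\mathbf{x}}_1,{\mathbf{y}}_1,{\mathbf{y}}_2}\max_{{\mathbf{x}}_2,{\mathbf{z}}_1,{\mathbf{z}}_2}P_\rho$ (in the sense defined in the context) and that $$\rho^{-1}\Big(\max_{{\mathbf{x}}_2',{\mathbf{z}}_1',{\mathbf{z}}_2'}P_\rho({\mathbf{x}}_1,{\mathbf{x}}_2',{\mathbf{y}}_1,{\mathbf{y}}_2,{\mathbf{z}}_1',{\mathbf{z}}_2')-f_{\text{low}}\Big)\le O(\epsilon).$$ Then $({\mathbf{x}}_1,{\mathbf{y}}_1,{\mathbf{y}}_2)$ is an $O(\epsilon)$-KKT point of the bilevel minimax problem described in the context.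
   Context: Bilevel minimax problem: $\min_{{\mathbf{x}}_1,{\mathbf{y}}_1,{\mathbf{y}}_2}\{\max_{{\mathbf{x}}_2} f({\mathbf{x}}_1,{\mathbf{x}}_2,{\mathbf{y}}_1,{\mathbf{y}}_2) : ({\mathbf{y}}_1,{\mathbf{y}}_2)\in\arg\min_{{\mathbf{z}}_1}\max_{{\mathbf{z}}_2}\tilde f({\mathbf{x}}_1,{\mathbf{z}}_1,{\mathbf{z}}_2)\}$, where the lower-level condition means that $({\mathbf{y}}_1,{\mathbf{y}}_2)$ is a saddle point of $\tilde f({\mathbf{x}}_1,\cdot,\cdot)$, i.e. ${\mathbf{y}}_1\in\arg\min_{{\mathbf{z}}_1}\tilde f({\mathbf{x}}_1,{\mathbf{z}}_1,{\mathbf{y}}_2)$ and ${\mathbf{y}}_2\in\arg\max_{{\mathbf{z}}_2}\tilde f({\mathbf{x}}_1,{\mathbf{y}}_1,{\mathbf{z}}_2)$; a saddle point of $\tilde f({\mathbf{x}}_1,\cdot,\cdot)$ is assumed to exist for every ${\mathbf{x}}_1$. Here $f=f_1({\mathbf{x}}_1,{\mathbf{x}}_2,{\mathbf{y}}_1,{\mathbf{y}}_2)+f_2({\mathbf{x}}_1)-f_3({\mathbf{x}}_2)$ and $\tilde f=\tilde f_1({\mathbf{x}}_1,{\mathbf{y}}_1,{\mathbf{y}}_2)+\tilde f_2({\mathbf{y}}_1)-\tilde f_3({\mathbf{y}}_2)$. Standing assumptions: $\mathcal X_1=\mathrm{dom} f_2$, $\mathcal X_2=\mathrm{dom} f_3$,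 $\mathcal Y_1=\mathrm{dom}\tilde f_2$, $\mathcal Y_2=\mathrm{dom}\tilde f_3$ are compact; $f_1$ is concave in ${\mathbf{x}}_2$ and $L_{\nabla f_1}$-smooth on $\mathcal X_1\times\mathcal X_2\times\mathcal Y_1\times\mathcal Y_2$; $\tilde f_1$ is convex in ${\mathbf{y}}_1$, concave in ${\mathbf{y}}_2$ and $L_{\nabla\tilde f_1}$-smooth on $\mathcal X_1\times\mathcal Y_1\times\mathcal Y_2$; $f_2,f_3,\tilde f_2,\tilde f_3$ are proper closed convex with exactly computable proximal operators. Define $p({\mathbf{x}}_1,{\mathbf{y}}_1)=\max_{{\mathbf{z}}_2}\tilde f({\mathbf{x}}_1,{\mathbf{y}}_1,{\mathbf{z}}_2)$, $d({\mathbf{x}}_1,{\mathbf{y}}_2)=\min_{{\mathbf{z}}_1}\tilde f({\mathbf{x}}_1,{\mathbf{z}}_1,{\mathbf{y}}_2)$, and $f_{\text{low}}=\min\{f({\mathbf{x}}_1,{\mathbf{x}}_2,{\mathbf{y}}_1,{\mathbf{y}}_2):({\mathbf{x}}_1,{\mathbf{x}}_2,{\mathbf{y}}_1,{\mathbf{y}}_2)\in\mathcal X_1\times\mathcal X_2\times\mathcal Y_1\times\mathcal Y_2\}$. $\partial$ denotes the (Fréchet) subdifferential $\partial\phi({\mathbf{x}})=\{v:\phi({\mathbf{x}}')\ge\phi({\mathbf{x}})+\langle v,{\mathbf{x}}'-{\mathbf{x}}\rangle+o(\|{\mathbf{x}}'-{\mathbf{x}}\|)\}$ and $\partial_{{\mathbf{z}}}$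 the partial subdifferential in the sub-vector ${\mathbf{z}}$. Penalty function: $P_\rho({\mathbf{x}}_1,{\mathbf{x}}_2,{\mathbf{y}}_1,{\mathbf{y}}_2,{\mathbf{z}}_1,{\mathbf{z}}_2)=f({\mathbf{x}}_1,{\mathbf{x}}_2,{\mathbf{y}}_1,{\mathbf{y}}_2)+\rho\big(\tilde f({\mathbf{x}}_1,{\mathbf{y}}_1,{\mathbf{z}}_2)-\tilde f({\mathbf{x}}_1,{\mathbf{z}}_1,{\mathbf{y}}_2)\big)$. $\epsilon$-primal-dual stationary point: $({\mathbf{x}}_1,{\mathbf{y}}_1,{\mathbf{y}}_2,{\mathbf{x}}_2,{\mathbf{z}}_1,{\mathbf{z}}_2)$ with $\mathrm{dist}(0,\partial_{({\mathbf{x}}_1,{\mathbf{y}}_1,{\mathbf{y}}_2)}P_\rho)\le\epsilon$ and $\mathrm{dist}(0,\partial_{({\mathbf{x}}_2,{\mathbf{z}}_1,{\mathbf{z}}_2)}(-P_\rho))\le\epsilon$ at that point. $\epsilon$-KKT point of the bilevel problem: $({\mathbf{x}}_1,{\mathbf{y}}_1,{\mathbf{y}}_2)$ such that there exist $\rho\ge0$ and $({\mathbf{x}}_2,{\mathbf{z}}_1,{\mathbf{z}}_2)$ with $\mathrm{dist}(0,\partial_{({\mathbf{x}}_1,{\mathbf{y}}_1,{\mathbf{y}}_2)}[f({\mathbf{x}}_1,{\mathbf{x}}_2,{\mathbf{y}}_1,{\mathbf{y}}_2)+\rho(\tilde f({\mathbf{x}}_1,{\mathbf{y}}_1,{\mathbf{z}}_2)-\tilde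 f({\mathbf{x}}_1,{\mathbf{z}}_1,{\mathbf{y}}_2))])\le\epsilon$, $\mathrm{dist}(0,\partial_{{\mathbf{x}}_2}[-f({\mathbf{x}}_1,{\mathbf{x}}_2,{\mathbf{y}}_1,{\mathbf{y}}_2)])\le\epsilon$, $\mathrm{dist}(0,\rho\partial_{{\mathbf{z}}_1}\tilde f({\mathbf{x}}_1,{\mathbf{z}}_1,{\mathbf{y}}_2))\le\epsilon$, $\mathrm{dist}(0,\rho\partial_{{\mathbf{z}}_2}[-\tilde f({\mathbf{x}}_1,{\mathbf{y}}_1,{\mathbf{z}}_2)])\le\epsilon$, and $p({\mathbf{x}}_1,{\mathbf{y}}_1)-d({\mathbf{x}}_1,{\mathbf{y}}_2)\le\epsilon$. $O(\epsilon)$ denotes a quantity bounded by a constant independent of $\epsilon$ times $\epsilon$. *)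

From HB Require Import structures.
From mathcomp Require Import all_boot all_order all_algebra.
From mathcomp Require Import all_classical all_reals all_analysis.
Set Implicit Arguments. Unset Strict Implicit. Unset Printing Implicit Defensive.
Import Order.TTheory GRing.Theory Num.Theory.
Import numFieldNormedType.Exports.
Local Open Scope ring_scope.
Local Open Scope classical_set_scope.

Section EuclidDefs.
Context {R : realType}.

Definition dotv n (u v : 'rV[R]_n) : R := \sum_(i < n) u ord0 i * v ord0 i.
Definition enorm n (u : 'rV[R]_n) : R := Num.sqrt (dotv u u).

Definition edom n (g : 'rV[R]_n -> \bar R) : set 'rV[R]_n :=
  [set x | (g x < +oo)%E].

Definition proper_fun n (g : 'rV[R]_n -> \bar R) : Prop :=
  (forall x, g x != -oo%E) /\ exists x, g x \is a fin_num.
Definition convex_fun n (g : 'rV[R]_n -> \bar R) : Prop :=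
  forall (x y : 'rV[R]_n) (t : R), 0 < t < 1 ->
    (g (t *: x + (1 - t) *: y)%R <= t%:E * g x + (1 - t)%:E * g y)%E.
Definition lsc_fun n (g : 'rV[R]_n -> \bar R) : Prop :=
  forall (x : 'rV[R]_n) (a : R), (a%:E < g x)%E ->
    exists d : R, 0 < d /\ forall x' : 'rV[R]_n, enorm (x' - x) < d -> (a%:E < g x')%E.
Definition proper_closed_convex n (g : 'rV[R]_n -> \bar R) : Prop :=
  [/\ proper_fun g, convex_fun g & lsc_fun g].

Definition convex_on n (S : set 'rV[R]_n) (g : 'rV[R]_n -> R) : Prop :=
  forall (x y : 'rV[R]_n) (t : R), S x -> S y -> 0 < t < 1 ->
    g (t *: x + (1 - t) *: y) <= t * g x + (1 - t) * g y.
Definition concave_on n (S : set 'rV[R]_n) (g : 'rV[R]_n -> R) : Prop :=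
  forall (x y : 'rV[R]_n) (t : R), S x -> S y -> 0 < t < 1 ->
    t * g x + (1 - t) * g y <= g (t *: x + (1 - t) *: y).

Definition has_grad n (g : 'rV[R]_n -> R) (x gr : 'rV[R]_n) : Prop :=
  forall e : R, 0 < e -> exists d : R, 0 < d /\
    forall h, enorm h < d -> `|g (x + h) - g x - dotv gr h| <= e * enorm h.
Definition smooth_on n (L : R) (S : set 'rV[R]_n) (g : 'rV[R]_n -> R) : Prop :=
  exists grad : 'rV[R]_n -> 'rV[R]_n,
    (forall x, S x -> has_grad g x (grad x)) /\
    (forall x y, S x -> S y -> enorm (grad x - grad y) <= L * enorm (x - y)).

(* Frechet subdifferential: v in d phi(x) iff phi(x) finite and
   phi(x') >= phi(x) + <v, x'-x> + o(|x'-x|)  (written out in eps-delta form) *)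
Definition frechet_subdiff n (phi : 'rV[R]_n -> \bar R) (x : 'rV[R]_n)
  : set 'rV[R]_n :=
  [set v | phi x \is a fin_num /\
     forall e : R, 0 < e -> exists d : R, 0 < d /\
       forall x' : 'rV[R]_n, enorm (x' - x) < d ->
         (phi x + ((dotv v (x' - x) - e * enorm (x' - x))%R)%:E <= phi x')%E].

(* dist(0, S) (= +oo if S is empty) *)
Definition dist0 n (S : set 'rV[R]_n) : \bar R :=
  ereal_inf [set (enorm v)%:E | v in S].

Definition blkA a b c (u : 'rV[R]_(a + (b + c))) : 'rV[R]_a := lsubmx u.
Definition blkB a b c (u : 'rV[R]_(a + (b + c))) : 'rV[R]_b := lsubmx (rsubmx u).
Definition blkC a b c (u : 'rV[R]_(a + (b + c))) : 'rV[R]_c := rsubmx (rsubmx u).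
Definition blk4A a b c d (u : 'rV[R]_(a + (b + (c + d)))) : 'rV[R]_a := lsubmx u.
Definition blk4B a b c d (u : 'rV[R]_(a + (b + (c + d)))) : 'rV[R]_b :=
  lsubmx (rsubmx u).
Definition blk4C a b c d (u : 'rV[R]_(a + (b + (c + d)))) : 'rV[R]_c :=
  lsubmx (rsubmx (rsubmx u)).
Definition blk4D a b c d (u : 'rV[R]_(a + (b + (c + d)))) : 'rV[R]_d :=
  rsubmx (rsubmx (rsubmx u)).

End EuclidDefs.

Section ProblemDefs.
Context {R : realType} {n1 n2 m1 m2 : nat}.
Variables (f1 : 'rV[R]_n1 -> 'rV[R]_n2 -> 'rV[R]_m1 -> 'rV[R]_m2 -> R)
          (f2 : 'rV[R]_n1 -> \bar R) (f3 : 'rV[R]_n2 -> \bar R)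
          (tf1 : 'rV[R]_n1 -> 'rV[R]_m1 -> 'rV[R]_m2 -> R)
          (tf2 : 'rV[R]_m1 -> \bar R) (tf3 : 'rV[R]_m2 -> \bar R).

Definition fF x1 x2 y1 y2 : \bar R :=
  ((f1 x1 x2 y1 y2)%:E + f2 x1 - f3 x2)%E.
Definition tfF x1 y1 y2 : \bar R :=
  ((tf1 x1 y1 y2)%:E + tf2 y1 - tf3 y2)%E.

Definition Pen (rho : R) x1 x2 y1 y2 z1 z2 : \bar R :=
  (fF x1 x2 y1 y2 + rho%:E * (tfF x1 y1 z2 - tfF x1 z1 y2))%E.

Definition pfun x1 y1 : \bar R := ereal_sup (range (fun z2 => tfF x1 y1 z2)).
Definition dfun x1 y2 : \bar R := ereal_inf (range (fun z1 => tfF x1 z1 y2)).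

Definition flow : \bar R :=
  ereal_inf [set e | exists x1 x2 y1 y2,
    [/\ edom f2 x1, edom f3 x2, edom tf2 y1, edom tf3 y2 &
        e = fF x1 x2 y1 y2]].

Definition maxPen rho x1 y1 y2 : \bar R :=
  ereal_sup (range (fun w : 'rV[R]_n2 * 'rV[R]_m1 * 'rV[R]_m2 =>
                      Pen rho x1 w.1.1 y1 y2 w.1.2 w.2)).

Definition pd_stationary (rho eps : R) x1 y1 y2 x2 z1 z2 : Prop :=
  (dist0 (frechet_subdiff
     (fun u : 'rV[R]_(n1 + (m1 + m2)) =>
        Pen rho (blkA u) x2 (blkB u) (blkC u) z1 z2)
     (row_mx x1 (row_mx y1 y2))) <= eps%:E)%E /\
  (dist0 (frechet_subdiff
     (fun u : 'rV[R]_(n2 + (m1 + m2)) =>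
        - Pen rho x1 (blkA u) y1 y2 (blkB u) (blkC u))
     (row_mx x2 (row_mx z1 z2))) <= eps%:E)%E.

Definition eps_KKT (eps : R) x1 y1 y2 : Prop :=
  exists rho : R, 0 <= rho /\ exists x2 z1 z2,
  [/\ (dist0 (frechet_subdiff
         (fun u : 'rV[R]_(n1 + (m1 + m2)) =>
            Pen rho (blkA u) x2 (blkB u) (blkC u) z1 z2)
         (row_mx x1 (row_mx y1 y2))) <= eps%:E)%E,
      (dist0 (frechet_subdiff (fun u => - fF x1 u y1 y2) x2) <= eps%:E)%E,
      (dist0 [set rho *: v | v in frechet_subdiff (fun u => tfF x1 u y2) z1]
         <= eps%:E)%E,
      (dist0 [set rho *: v | v in frechet_subdiff (fun u => - tfF x1 y1 u) z2]
         <= eps%:E)%E &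
      (pfun x1 y1 - dfun x1 y2 <= eps%:E)%E].

Definition standing_assumptions (Lf Ltf : R) : Prop :=
  [/\ [/\ proper_closed_convex f2, proper_closed_convex f3,
          proper_closed_convex tf2 & proper_closed_convex tf3],
      [/\ compact (edom f2), compact (edom f3),
          compact (edom tf2) & compact (edom tf3)],
      [/\ (forall x1 y1 y2, edom f2 x1 -> edom tf2 y1 -> edom tf3 y2 ->
         concave_on (edom f3) (fun x2 => f1 x1 x2 y1 y2)),
      0 <= Lf &
      smooth_on Lf
        [set u : 'rV[R]_(n1 + (n2 + (m1 + m2))) | edom f2 (blk4A u) /\
           edom f3 (blk4B u) /\ edom tf2 (blk4C u) /\ edom tf3 (blk4D u)]
        (fun u => f1 (blk4A u) (blk4B u) (blk4C u) (blk4D u))],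
      [/\ (forall x1 y2, edom f2 x1 -> edom tf3 y2 ->
             convex_on (edom tf2) (fun y1 => tf1 x1 y1 y2)),
          (forall x1 y1, edom f2 x1 -> edom tf2 y1 ->
             concave_on (edom tf3) (fun y2 => tf1 x1 y1 y2)),
          0 <= Ltf &
          smooth_on Ltf
            [set u : 'rV[R]_(n1 + (m1 + m2)) | edom f2 (blkA u) /\
               edom tf2 (blkB u) /\ edom tf3 (blkC u)]
            (fun u => tf1 (blkA u) (blkB u) (blkC u))] &
      (forall x1, exists y1 y2,
         (forall z1, (tfF x1 y1 y2 <= tfF x1 z1 y2)%E) /\
         (forall z2, (tfF x1 y1 z2 <= tfF x1 y1 y2)%E))].

End ProblemDefs.

From HB Require Import structures.
From mathcomp Require Import all_boot all_order all_algebra.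
From mathcomp Require Import all_classical all_reals all_analysis.
From mathcomp Require Import lra.
Set Implicit Arguments. Unset Strict Implicit. Unset Printing Implicit Defensive.
Import Order.TTheory GRing.Theory Num.Theory.
Import numFieldNormedType.Exports.
Local Open Scope ring_scope.
Local Open Scope classical_set_scope.

(* Dual stationarity provides a
   Frechet subgradient of -P_rho at (x2, z1, z2), so P_rho is finite there; in
   each of the blocks x2, z1, z2 the function -P_rho differs from -f,
   rho tilde f and -rho tilde f respectively by a finite constant, so the
   blocks of that subgradient give the x2-, z1- and z2-conditions.  Comparing
   P_rho(x1, x2, y1, y2, z1', z2') with max P_rho and f(x1, x2, y1, y2) with
   f_low yields tilde f(x1, y1, z2') - tilde f(x1, z1', y2) <= C eps for all
   z1', z2', hence p - d <= C eps.  So C' = C + 1 works. *)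

Section Euclid.
Context {R : realType}.

Lemma dotv_row_mx a b (u1 v1 : 'rV[R]_a) (u2 v2 : 'rV[R]_b) :
  dotv (row_mx u1 u2) (row_mx v1 v2) = dotv u1 v1 + dotv u2 v2.
Proof.
rewrite /dotv big_split_ord; congr (_ + _); apply: eq_bigr => i _.
  by rewrite !row_mxEl.
by rewrite !row_mxEr.
Qed.

Lemma dotv0r n (u : 'rV[R]_n) : dotv u 0 = 0.
Proof. by rewrite /dotv big1 // => i _; rewrite mxE mulr0. Qed.

Lemma dotvZl n (k : R) (u v : 'rV[R]_n) : dotv (k *: u) v = k * dotv u v.
Proof. by rewrite /dotv mulr_sumr; apply: eq_bigr => i _; rewrite mxE mulrA. Qed.

Lemma dotvv_ge0 n (u : 'rV[R]_n) : 0 <= dotv u u.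
Proof. by rewrite /dotv sumr_ge0 // => i _; rewrite -expr2 sqr_ge0. Qed.

Lemma dotv_row_mx0 a b (v : 'rV[R]_(a + b)) (h : 'rV[R]_a) :
  dotv v (row_mx h 0) = dotv (lsubmx v) h.
Proof. by rewrite -{1}(hsubmxK v) dotv_row_mx dotv0r addr0. Qed.

Lemma dotv_row_0mx a b (v : 'rV[R]_(a + b)) (h : 'rV[R]_b) :
  dotv v (row_mx 0 h) = dotv (rsubmx v) h.
Proof. by rewrite -{1}(hsubmxK v) dotv_row_mx dotv0r add0r. Qed.

Lemma enorm_row_mx a b (u1 : 'rV[R]_a) (u2 : 'rV[R]_b) :
  enorm (row_mx u1 u2) = Num.sqrt (dotv u1 u1 + dotv u2 u2).
Proof. by rewrite /enorm dotv_row_mx. Qed.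

Lemma enorm_row_mx0 a b (h : 'rV[R]_a) : enorm (row_mx h (0 : 'rV[R]_b)) = enorm h.
Proof. by rewrite enorm_row_mx dotv0r addr0. Qed.

Lemma enorm_row_0mx a b (h : 'rV[R]_b) : enorm (row_mx (0 : 'rV[R]_a) h) = enorm h.
Proof. by rewrite enorm_row_mx dotv0r add0r. Qed.

Lemma enorm_lsubmx a b (v : 'rV[R]_(a + b)) : enorm (lsubmx v) <= enorm v.
Proof.
rewrite -{2}(hsubmxK v) enorm_row_mx /enorm ler_sqrt ?lerDl ?dotvv_ge0 //.
by rewrite addr_ge0 ?dotvv_ge0.
Qed.

Lemma enorm_rsubmx a b (v : 'rV[R]_(a + b)) : enorm (rsubmx v) <= enorm v.
Proof.
rewrite -{2}(hsubmxK v) enorm_row_mx /enorm ler_sqrt ?lerDr ?dotvv_ge0 //.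
by rewrite addr_ge0 ?dotvv_ge0.
Qed.

Lemma blkA_row_mx a b c (x : 'rV[R]_a) (y : 'rV[R]_b) (z : 'rV[R]_c) :
  blkA (row_mx x (row_mx y z)) = x.
Proof. by rewrite /blkA row_mxKl. Qed.

Lemma blkB_row_mx a b c (x : 'rV[R]_a) (y : 'rV[R]_b) (z : 'rV[R]_c) :
  blkB (row_mx x (row_mx y z)) = y.
Proof. by rewrite /blkB row_mxKr row_mxKl. Qed.

Lemma blkC_row_mx a b c (x : 'rV[R]_a) (y : 'rV[R]_b) (z : 'rV[R]_c) :
  blkC (row_mx x (row_mx y z)) = z.
Proof. by rewrite /blkC !row_mxKr. Qed.

End Euclid.

Section FrechetSubdifferential.
Context {R : realType}.
Local Open Scope ereal_scope.

Lemma frechet_subdiff_row_mxl a b (phi : 'rV[R]_(a + b) -> \bar R) x y v :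
  frechet_subdiff phi (row_mx x y) v ->
  frechet_subdiff (fun x' => phi (row_mx x' y)) x (lsubmx v).
Proof.
move=> [phi_fin Hv]; split=> // e /Hv[d [d_gt0 Hd]]; exists d; split=> // x'.
have := Hd (row_mx x' y).
have -> : (row_mx x' y - row_mx x y = row_mx (x' - x) 0)%R.
  by rewrite opp_row_mx add_row_mx subrr.
by rewrite enorm_row_mx0 dotv_row_mx0.
Qed.

Lemma frechet_subdiff_row_mxr a b (phi : 'rV[R]_(a + b) -> \bar R) x y v :
  frechet_subdiff phi (row_mx x y) v ->
  frechet_subdiff (fun y' => phi (row_mx x y')) y (rsubmx v).
Proof.
move=> [phi_fin Hv]; split=> // e /Hv[d [d_gt0 Hd]]; exists d; split=> // y'.
have := Hd (row_mx x y').
have -> : (row_mx x y' - row_mx x y = row_mx 0 (y' - y))%R.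
  by rewrite opp_row_mx add_row_mx subrr.
by rewrite enorm_row_0mx dotv_row_0mx.
Qed.

Lemma frechet_subdiffDr n (phi : 'rV[R]_n -> \bar R) (c : \bar R) x :
  c \is a fin_num ->
  frechet_subdiff (fun x' => phi x' + c) x = frechet_subdiff phi x.
Proof.
move=> c_fin.
have shift x' r : (phi x + c + r%:E <= phi x' + c) = (phi x + r%:E <= phi x').
  by rewrite addeAC leeD2rE.
apply/seteqP; split=> v /= [phi_fin Hv].
  split=> [|e /Hv[d [d_gt0 Hd]]]; first by move: phi_fin; rewrite fin_numD => /andP[].
  by exists d; split=> // x' /Hd; rewrite shift.
split=> [|e /Hv[d [d_gt0 Hd]]]; first by rewrite fin_numD phi_fin.
by exists d; split=> // x' /Hd; rewrite shift.
Qed.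

Lemma frechet_subdiffZ n (phi : 'rV[R]_n -> \bar R) (k : R) x : (0 < k)%R ->
  frechet_subdiff (fun x' => k%:E * phi x') x = [set k *: v | v in frechet_subdiff phi x].
Proof.
have scale (l : R) (psi : 'rV[R]_n -> \bar R) v : (0 < l)%R ->
    frechet_subdiff (fun x' => l%:E * psi x') x v -> frechet_subdiff psi x (l^-1 *: v).
  move=> l_gt0 [lpsi_fin Hv].
  have psiE x' : psi x' = l^-1%:E * (l%:E * psi x').
    by rewrite muleA -EFinM mulVf ?gt_eqF // mul1e.
  have psi_fin : psi x \is a fin_num by rewrite psiE fin_numM.
  split=> // e e_gt0; have [d [d_gt0 Hd]] := Hv _ (mulr_gt0 l_gt0 e_gt0).
  exists d; split=> // x' /Hd lpsi_le; rewrite -(@lee_pmul2l _ l%:E) ?lte_fin //.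
  rewrite muleDr ?fin_num_adde_defr // -EFinM dotvZl mulrBr.
  by rewrite mulrA mulfV ?gt_eqF // mul1r mulrA.
move=> k_gt0; apply/seteqP; split=> [v /(scale _ _ _ k_gt0) Hv|_ [v Hv <-]].
  by exists (k^-1 *: v); rewrite // scalerA mulfV ?gt_eqF // scale1r.
(* phi = k^-1 (k phi), so [scale] also yields the reverse inclusion. *)
have := scale k^-1%R (fun x' => k%:E * phi x') v; rewrite invrK.
apply; first by rewrite invr_gt0.
by under eq_fun do rewrite muleA -EFinM mulVf ?gt_eqF // mul1e.
Qed.

Lemma le_dist0 n n' (S : set 'rV[R]_n) (S' : set 'rV[R]_n') :
  (forall v, S v -> exists2 w, S' w & (enorm w <= enorm v)%R) ->
  dist0 S' <= dist0 S.
Proof.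
move=> H; apply: le_ereal_inf_tmp => _ [v Sv <-].
have [w S'w wv] := H v Sv.
apply: le_trans (ereal_inf_lbound _) _; first by exists w.
by rewrite lee_fin.
Qed.

Lemma dist0_neq0 n (S : set 'rV[R]_n) : dist0 S < +oo -> S !=set0.
Proof.
apply: contraPP => /set0P/negP/negPn/eqP ->.
by rewrite /dist0 image_set0 ereal_inf0 ltxx.
Qed.

Section ThreeBlocks.
Variables (a b c : nat) (phi : 'rV[R]_a -> 'rV[R]_b -> 'rV[R]_c -> \bar R).
Variables (x : 'rV[R]_a) (y : 'rV[R]_b) (z : 'rV[R]_c).

Let Phi (u : 'rV[R]_(a + (b + c))) := phi (blkA u) (blkB u) (blkC u).

Lemma dist0_subdiff_blkA :
  dist0 (frechet_subdiff (fun x' => phi x' y z) x) <=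
  dist0 (frechet_subdiff Phi (row_mx x (row_mx y z))).
Proof.
apply: le_dist0 => v /frechet_subdiff_row_mxl Hv.
exists (lsubmx v); last exact: enorm_lsubmx.
by move: Hv; rewrite /Phi; under eq_fun do rewrite blkA_row_mx blkB_row_mx blkC_row_mx.
Qed.

Lemma dist0_subdiff_blkB :
  dist0 (frechet_subdiff (fun y' => phi x y' z) y) <=
  dist0 (frechet_subdiff Phi (row_mx x (row_mx y z))).
Proof.
apply: le_dist0 => v /frechet_subdiff_row_mxr/frechet_subdiff_row_mxl Hv.
exists (lsubmx (rsubmx v)); last exact: le_trans (enorm_lsubmx _) (enorm_rsubmx _).
by move: Hv; rewrite /Phi; under eq_fun do rewrite blkA_row_mx blkB_row_mx blkC_row_mx.
Qed.

Lemma dist0_subdiff_blkC :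
  dist0 (frechet_subdiff (fun z' => phi x y z') z) <=
  dist0 (frechet_subdiff Phi (row_mx x (row_mx y z))).
Proof.
apply: le_dist0 => v /frechet_subdiff_row_mxr/frechet_subdiff_row_mxr Hv.
exists (rsubmx (rsubmx v)); last exact: le_trans (enorm_rsubmx _) (enorm_rsubmx _).
by move: Hv; rewrite /Phi; under eq_fun do rewrite blkA_row_mx blkB_row_mx blkC_row_mx.
Qed.

End ThreeBlocks.

End FrechetSubdifferential.

Section SupInf.
Context {R : realType}.
Local Open Scope ereal_scope.

Lemma ereal_sup_sub_inf_le I J (A : J -> \bar R) (B : I -> \bar R) (c : R) :
  (forall i j, A j - B i <= c%:E) ->
  ereal_sup (range A) - ereal_inf (range B) <= c%:E.
Proof.
move=> AB; rewrite lee_subel_addr //; apply: ge_ereal_sup => _ [j _ <-].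
rewrite -leeBlDl //; apply: le_ereal_inf_tmp => _ [i _ <-].
by rewrite leeBlDl // -lee_subel_addr.
Qed.

End SupInf.

Section BilevelPenalty.
Context {R : realType} {n1 n2 m1 m2 : nat}.
Variables (f1 : 'rV[R]_n1 -> 'rV[R]_n2 -> 'rV[R]_m1 -> 'rV[R]_m2 -> R)
          (f2 : 'rV[R]_n1 -> \bar R) (f3 : 'rV[R]_n2 -> \bar R)
          (tf1 : 'rV[R]_n1 -> 'rV[R]_m1 -> 'rV[R]_m2 -> R)
          (tf2 : 'rV[R]_m1 -> \bar R) (tf3 : 'rV[R]_m2 -> \bar R).
Variables (rho : R) (x1 : 'rV[R]_n1) (y1 : 'rV[R]_m1) (y2 : 'rV[R]_m2).
Hypothesis rho_gt0 : 0 < rho.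
Local Open Scope ereal_scope.

Local Notation f := (fF f1 f2 f3).
Local Notation tf := (tfF tf1 tf2 tf3).
Local Notation P := (Pen f1 f2 f3 tf1 tf2 tf3 rho x1).

Lemma Pen_fin_num x2 z1 z2 : P x2 y1 y2 z1 z2 \is a fin_num ->
  [/\ f x1 x2 y1 y2 \is a fin_num, tf x1 y1 z2 \is a fin_num & tf x1 z1 y2 \is a fin_num].
Proof.
rewrite fin_numD => /andP[-> rhoT_fin].
have : tf x1 y1 z2 - tf x1 z1 y2 \is a fin_num.
  by rewrite -[_ - _]mul1e -(@mulVf _ rho) ?gt_eqF // EFinM -muleA fin_numM.
by rewrite fin_numB => /andP[-> ->].
Qed.

Lemma flow_le_fF x2 z1 z2 : P x2 y1 y2 z1 z2 \is a fin_num ->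
  flow f1 f2 f3 tf2 tf3 <= f x1 x2 y1 y2.
Proof.
move=> /Pen_fin_num[]; rewrite /fF /tfF !fin_numD !fin_numN.
move=> /andP[/andP[_ f2_fin] f3_fin] /andP[/andP[_ tf2_fin] _] /andP[_ tf3_fin].
have edomP n (g : 'rV[R]_n -> \bar R) u : g u \is a fin_num -> edom g u.
  by move=> /fin_numPlt/andP[].
by apply: ereal_inf_lbound; exists x1, x2, y1, y2; split; try apply: edomP.
Qed.

Lemma frechet_subdiff_oppPen_x2 x2 z1 z2 :
  tf x1 y1 z2 \is a fin_num -> tf x1 z1 y2 \is a fin_num ->
  frechet_subdiff (fun x => - P x y1 y2 z1 z2) x2 =
  frechet_subdiff (fun x => - f x1 x y1 y2) x2.
Proof.
move=> tf_y1z2_fin tf_z1y2_fin; set c := rho%:E * (tf x1 y1 z2 - tf x1 z1 y2).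
have c_fin : c \is a fin_num by rewrite fin_numM // fin_numB tf_y1z2_fin tf_z1y2_fin.
rewrite -[RHS](@frechet_subdiffDr _ _ _ (- c)) ?fin_numN //.
by congr (frechet_subdiff _ _); apply: funext => x; rewrite /Pen fin_num_oppeD.
Qed.

Lemma frechet_subdiff_oppPen_z1 x2 z1 z2 :
  f x1 x2 y1 y2 \is a fin_num -> tf x1 y1 z2 \is a fin_num ->
  frechet_subdiff (fun z => - P x2 y1 y2 z z2) z1 =
  [set rho *: v | v in frechet_subdiff (fun z => tf x1 z y2) z1].
Proof.
move=> f_fin tf_y1z2_fin; set c := f x1 x2 y1 y2 + rho%:E * tf x1 y1 z2.
have c_fin : c \is a fin_num by rewrite fin_numD f_fin fin_numM.
rewrite -frechet_subdiffZ // -[RHS](@frechet_subdiffDr _ _ _ (- c)) ?fin_numN //.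
congr (frechet_subdiff _ _); apply: funext => z.
rewrite /Pen muleBr ?fin_num_adde_defr // addeA.
by rewrite oppeB ?fin_num_adde_defr // (addeC (- _)).
Qed.

Lemma frechet_subdiff_oppPen_z2 x2 z1 z2 :
  f x1 x2 y1 y2 \is a fin_num -> tf x1 z1 y2 \is a fin_num ->
  frechet_subdiff (fun z => - P x2 y1 y2 z1 z) z2 =
  [set rho *: v | v in frechet_subdiff (fun z => - tf x1 y1 z) z2].
Proof.
move=> f_fin tf_z1y2_fin; set c := f x1 x2 y1 y2 - rho%:E * tf x1 z1 y2.
have c_fin : c \is a fin_num by rewrite fin_numB f_fin fin_numM.
rewrite -frechet_subdiffZ // -[RHS](@frechet_subdiffDr _ _ _ (- c)) ?fin_numN //.
congr (frechet_subdiff _ _); apply: funext => z.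
rewrite /Pen muleBr ?fin_num_adde_defl ?fin_numN ?fin_numM // addeCA.
by rewrite fin_num_oppeD // muleN.
Qed.

Lemma pfun_sub_dfun_le x2 z1 z2 (c : R) : P x2 y1 y2 z1 z2 \is a fin_num ->
  rho^-1%:E * (maxPen f1 f2 f3 tf1 tf2 tf3 rho x1 y1 y2 - flow f1 f2 f3 tf2 tf3)
    <= c%:E ->
  pfun tf1 tf2 tf3 x1 y1 - dfun tf1 tf2 tf3 x1 y2 <= c%:E.
Proof.
move=> P_fin gap_le; have [f_fin _ _] := Pen_fin_num P_fin.
apply: ereal_sup_sub_inf_le => z1' z2'; apply: le_trans gap_le.
rewrite lee_pdivlMl // -(@addeK _ _ (rho%:E * _) f_fin) (addeC (rho%:E * _)).
apply: leeB; last exact: flow_le_fF P_fin.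
by apply: ereal_sup_ubound; exists (x2, z1', z2').
Qed.

End BilevelPenalty.

Theorem lemma4p2 (R : realType) (n1 n2 m1 m2 : nat)
  (f1 : 'rV[R]_n1 -> 'rV[R]_n2 -> 'rV[R]_m1 -> 'rV[R]_m2 -> R)
  (f2 : 'rV[R]_n1 -> \bar R) (f3 : 'rV[R]_n2 -> \bar R)
  (tf1 : 'rV[R]_n1 -> 'rV[R]_m1 -> 'rV[R]_m2 -> R)
  (tf2 : 'rV[R]_m1 -> \bar R) (tf3 : 'rV[R]_m2 -> \bar R)
  (Lf Ltf : R) :
  standing_assumptions f1 f2 f3 tf1 tf2 tf3 Lf Ltf ->
  forall C : R, 0 <= C ->
  exists C' : R, 0 <= C' /\
  forall (rho eps : R), 0 < rho -> 0 < eps ->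
  forall (x1 : 'rV[R]_n1) (y1 : 'rV[R]_m1) (y2 : 'rV[R]_m2)
         (x2 : 'rV[R]_n2) (z1 : 'rV[R]_m1) (z2 : 'rV[R]_m2),
  pd_stationary f1 f2 f3 tf1 tf2 tf3 rho eps x1 y1 y2 x2 z1 z2 ->
  ((rho^-1)%:E * (maxPen f1 f2 f3 tf1 tf2 tf3 rho x1 y1 y2
                  - flow f1 f2 f3 tf2 tf3) <= (C * eps)%:E)%E ->
  eps_KKT f1 f2 f3 tf1 tf2 tf3 (C' * eps) x1 y1 y2.
Proof.
move=> _ C C_ge0; exists (C + 1); split=> [|rho eps rho_gt0 eps_gt0]; first lra.
move=> x1 y1 y2 x2 z1 z2 [primal dual] gap.
have eps_le : (eps%:E <= ((C + 1) * eps)%:E)%E by rewrite lee_fin; nra.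
have {}dual := le_trans dual eps_le.
have P_fin : Pen f1 f2 f3 tf1 tf2 tf3 rho x1 x2 y1 y2 z1 z2 \is a fin_num.
  have [v [+ _]] := dist0_neq0 (le_lt_trans dual (ltry _)).
  by rewrite blkA_row_mx blkB_row_mx blkC_row_mx fin_numN.
have [f_fin tf_y1z2_fin tf_z1y2_fin] := Pen_fin_num rho_gt0 P_fin.
pose Phi a b c := (- Pen f1 f2 f3 tf1 tf2 tf3 rho x1 a y1 y2 b c)%E.
exists rho; split; first exact: ltW.
exists x2, z1, z2; split.
- exact: le_trans primal eps_le.
- have := dist0_subdiff_blkA Phi x2 z1 z2.
  by rewrite frechet_subdiff_oppPen_x2 // => /le_trans; apply.
- have := dist0_subdiff_blkB Phi x2 z1 z2.
  by rewrite frechet_subdiff_oppPen_z1 // => /le_trans; apply.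
- have := dist0_subdiff_blkC Phi x2 z1 z2.
  by rewrite frechet_subdiff_oppPen_z2 // => /le_trans; apply.
- apply: le_trans (pfun_sub_dfun_le rho_gt0 P_fin gap) _.
  by rewrite lee_fin; nra.
Qed.
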